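(* Let $Y\in\mathbb{C}^{(n\times n)\cdot d}$, let $f$ be an NC function uniformly analytic in a uniformly open neighbourhood of $Y$, and let $f_\ell$, $f_\omega$ and the coefficients $\hat f_{\alpha,\beta;\omega}$ be as in the context. Then there is a constant $C>0$ such that for all $\ell\in\mathbb{N}$, $$\Big(\sum_{\substack{\alpha,\beta\in\mathbb{F}^+_n,\ \omega\in\mathbb{F}^+_d\\ |\alpha|=|\beta|=\ell+1=|\omega|+1}}|\hat f_{\alpha,\beta;\omega}|^2\Big)^{1/(2\ell)}\le C\,\|f_\ell\|_{\mathrm{CB}}^{1/\ell}.$$
   Context: $\mathbb{C}^{(k\times k)\cdot d}$ denotes column $d$-tuples of $k\times k$ matrices, with $\|X\|_{\mathrm{col}}$ the operator norm of the stacked $kd\times k$ matrix; the uniform topology is generated by the sets $\bigsqcup_m\{X\in\mathbb{C}^{(mk\times mk)\cdot d}:\|X-I_m\otimes Z\|_{\mathrm{col}}<r\}$. An NC function on a set $\Omega\subseteq\bigsqcup_k\mathbb{C}^{(k\times k)\cdot d}$ closed under direct sums is a map $f$ with $f(X)\in\mathbb{C}^{k\times k}$ at level $k$, $f(X\oplus X')=f(X)\oplus f(X')$, and $f(S^{-1}XS)=S^{-1}f(X)S$ whenever $X,S^{-1}XS\in\Omega$; it is uniformly analytic if $\Omega$ is uniformly open and $f$ is locally bounded in the uniform topology. $\mathbb{F}^+_k$ is the free monoid of words in $\{1,\dots,k\}$. Such $f$ has a Taylor–Taylor expansion at $Y$: there are unique $|\omega|$-linear maps $f_\omega:(\mathbb{C}^{n\times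 n})^{|\omega|}\to\mathbb{C}^{n\times n}$ ($\omega\in\mathbb{F}^+_d$) with $f(X)=\sum_\omega f_\omega\circ(X-I_m\otimes Y)^{\odot\omega}$ for $X$ near $Y$, where for $\omega=w_1\cdots w_\ell$, $f_\omega\circ(H_{w_1}\odot\cdots\odot H_{w_\ell})$ means the $m\times m$ block matrix obtained by applying $f_\omega$ to the Haagerup product of the $m\times m$ block matrices $H_{w_i}$ over $\mathbb{C}^{n\times n}$. Let $f_\ell$ be the $\ell$-linear map on $(\mathbb{C}^{(n\times n)\cdot d})^\ell$, $f_\ell(H^{(1)},\dots,H^{(\ell)})=\sum_{|\omega|=\ell}f_\omega(H^{(1)}_{w_1},\dots,H^{(\ell)}_{w_\ell})$, and $\|f_\ell\|_{\mathrm{CB}}$ its completely bounded norm (in the sense of Christensen–Sinclair), i.e. the cb-norm of its linearization on the $\ell$-fold Haagerup tensor product $E\otimes_h\cdots\otimes_hE$, where $E=\mathbb{C}^{(n\times n)\cdot d}$ carries the column operator space structure ($E^{i\times j}$ normed as $\mathbb{C}^{ind\times jn}$). Each $f_\omega$, $|\omega|=\ell$, is written uniquely as $f_\omega(G_1,\dots,G_\ell)=\sum_{\alpha,\beta}\hat f_{\alpha,\beta;\omega}E_{a_0,b_0}G_1E_{a_1,b_1}\cdots G_\ell E_{a_\ell,b_\ell}$, the sum over words $\alpha=a_0\cdots a_\ell,\beta=b_0\cdots b_\ell\in\mathbb{F}^+_n$, with $E_{i,j}$ the matrix units of $\mathbb{C}^{n\times n}$ and $\hat f_{\alpha,\beta;\omega}\in\mathbb{C}$.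 *)

From HB Require Import structures.
From mathcomp Require Import all_boot all_order all_algebra.
From mathcomp Require Import all_classical all_reals all_analysis.
From mathcomp Require Import complex mxtens.

Set Implicit Arguments.
Unset Strict Implicit.
Unset Printing Implicit Defensive.

Import Order.TTheory GRing.Theory Num.Theory.
Local Open Scope ring_scope.
Local Open Scope classical_set_scope.

Section NCDefs.
Variable R : realType.
Local Notation C := (complex R).

Definition cnorm2 (z : C) : R := complex.Re z ^+ 2 + complex.Im z ^+ 2.

Definition vnorm2 {k : nat} (v : 'cV[C]_k) : R := \sum_i cnorm2 (v i 0).

Definition opnorm {p q : nat} (A : 'M[C]_(p, q)) : R :=
  sup [set Num.sqrt (vnorm2 (A *m v)) | v in [set v : 'cV[C]_q | vnorm2 v <= 1]].

(* ||X||_col : operator norm of the stacked (k d) x k matrix col(X_1,...,X_d) *)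
Definition colnorm {d k : nat} (X : 'I_d -> 'M[C]_k) : R :=
  sup [set Num.sqrt (\sum_w vnorm2 (X w *m v))
      | v in [set v : 'cV[C]_k | vnorm2 v <= 1]].

Definition tsub {d k : nat} (X Z : 'I_d -> 'M[C]_k) : 'I_d -> 'M[C]_k :=
  fun w => X w - Z w.
Definition ampl {d k : nat} (m : nat) (Z : 'I_d -> 'M[C]_k) : 'I_d -> 'M[C]_(m * k) :=
  fun w => (1%:M : 'M[C]_m) *t Z w.
Definition dsum {d k k' : nat} (X : 'I_d -> 'M[C]_k) (X' : 'I_d -> 'M[C]_k') :
  'I_d -> 'M[C]_(k + k') := fun w => block_mx (X w) 0 0 (X' w).
Definition simil {d k : nat} (S : 'M[C]_k) (X : 'I_d -> 'M[C]_k) : 'I_d -> 'M[C]_k :=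
  fun w => invmx S *m X w *m S.

Definition nc_set {d : nat} (Omega : forall k, set ('I_d -> 'M[C]_k)) : Prop :=
  forall k k' (X : 'I_d -> 'M[C]_k) (X' : 'I_d -> 'M[C]_k'),
    Omega k X -> Omega k' X' -> Omega (k + k') (dsum X X').

Definition nc_function {d : nat} (Omega : forall k, set ('I_d -> 'M[C]_k))
  (f : forall k, ('I_d -> 'M[C]_k) -> 'M[C]_k) : Prop :=
  (forall k k' (X : 'I_d -> 'M[C]_k) (X' : 'I_d -> 'M[C]_k'),
     Omega k X -> Omega k' X' ->
     f (k + k') (dsum X X') = block_mx (f k X) 0 0 (f k' X'))
  /\ (forall k (S : 'M[C]_k) (X : 'I_d -> 'M[C]_k),
     S \in unitmx -> Omega k X -> Omega k (simil S X) ->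
     f k (simil S X) = invmx S *m f k X *m S).

(* uniform topology: basic ball of radius r around Z (level k) is
   the union over m of { X at level m k : ||X - I_m (x) Z||_col < r } *)
Definition uniformly_open {d : nat} (Omega : forall k, set ('I_d -> 'M[C]_k)) : Prop :=
  forall k (Z : 'I_d -> 'M[C]_k), Omega k Z ->
    exists2 r : R, 0 < r &
      forall m (X : 'I_d -> 'M[C]_(m * k)),
        colnorm (tsub X (ampl m Z)) < r -> Omega (m * k) X.

Definition uniformly_locally_bounded {d : nat}
  (Omega : forall k, set ('I_d -> 'M[C]_k))
  (f : forall k, ('I_d -> 'M[C]_k) -> 'M[C]_k) : Prop :=
  forall k (Z : 'I_d -> 'M[C]_k), Omega k Z ->
    exists2 r : R, 0 < r & exists M : R,
      forall m (X : 'I_d -> 'M[C]_(m * k)),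
        Omega (m * k) X -> colnorm (tsub X (ampl m Z)) < r ->
        opnorm (f (m * k) X) <= M.

(* block (p,q) (an n x n matrix) of an m x m block matrix over C^{n x n} *)
Definition blk {m n : nat} (H : 'M[C]_(m * n)) (p q : 'I_m) : 'M[C]_n :=
  \matrix_(i, j) H (mxtens_index (p, i)) (mxtens_index (q, j)).
Definition assemble {m n : nat} (B : 'I_m -> 'I_m -> 'M[C]_n) : 'M[C]_(m * n) :=
  \matrix_(i, j) B (mxtens_unindex i).1 (mxtens_unindex j).1
                   (mxtens_unindex i).2 (mxtens_unindex j).2.

(* phi o (H_1 (.) ... (.) H_l) : phi applied to the Haagerup product of the
   m x m block matrices H_i (over C^{n x n}) *)
Definition hprod {m n l : nat} (phi : seq 'M[C]_n -> 'M[C]_n)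
  (H : 'I_l -> 'M[C]_(m * n)) : 'M[C]_(m * n) :=
  assemble (fun p q =>
    \sum_(t : {ffun 'I_l.+1 -> 'I_m} | (t ord0 == p) && (t ord_max == q))
       phi [seq blk (H i) (t (widen_ord (leqnSn l) i)) (t (lift ord0 i)) | i : 'I_l]).

(* the degree-l part  sum_{|w| = l} f_w o (H_{w_1} (.) ... (.) H_{w_l}) *)
Definition homterm {d m n : nat} (fw : seq 'I_d -> seq 'M[C]_n -> 'M[C]_n)
  (l : nat) (H : 'I_d -> 'M[C]_(m * n)) : 'M[C]_(m * n) :=
  \sum_(w : l.-tuple 'I_d) hprod (fw w) (fun i => H (tnth w i)).

Definition mx_cvg {p q : nat} (u : nat -> 'M[C]_(p, q)) (L : 'M[C]_(p, q)) : Prop :=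
  forall eps : R, 0 < eps -> exists N0 : nat, forall N : nat, (N0 <= N)%N ->
    forall i j, cnorm2 ((u N - L) i j) < eps.

Definition multilinear_family {d n : nat}
  (fw : seq 'I_d -> seq 'M[C]_n -> 'M[C]_n) : Prop :=
  forall (w : seq 'I_d) (Gs : seq 'M[C]_n) (i : nat) (c : C) (G G' : 'M[C]_n),
    size Gs = size w -> (i < size w)%N ->
    fw w (set_nth 0 Gs i (c *: G + G')) =
    c *: fw w (set_nth 0 Gs i G) + fw w (set_nth 0 Gs i G').

Definition taylor_taylor {d n : nat} (Omega : forall k, set ('I_d -> 'M[C]_k))
  (f : forall k, ('I_d -> 'M[C]_k) -> 'M[C]_k) (Y : 'I_d -> 'M[C]_n)
  (fw : seq 'I_d -> seq 'M[C]_n -> 'M[C]_n) : Prop :=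
  exists2 r : R, 0 < r &
    forall m (X : 'I_d -> 'M[C]_(m * n)),
      colnorm (tsub X (ampl m Y)) < r ->
      Omega (m * n) X /\
      mx_cvg (fun N => \sum_(l < N) homterm fw l (tsub X (ampl m Y))) (f (m * n) X).

(* completely bounded norm of f_l (Christensen-Sinclair), E with the column
   operator space structure: M_m(E) is identified with d-tuples of
   (m n) x (m n) matrices normed by ||.||_col *)
Definition cbnorm {d n : nat} (fw : seq 'I_d -> seq 'M[C]_n -> 'M[C]_n) (l : nat) : R :=
  sup [set r : R | exists (m : nat) (Xs : 'I_l -> 'I_d -> 'M[C]_(m * n)),
         (forall i, colnorm (Xs i) <= 1) /\
         r = opnorm (\sum_(w : l.-tuple 'I_d) hprod (fw w) (fun i => Xs i (tnth w i)))].

Definition wordprod {n l : nat} (a b : (l.+1).-tuple 'I_n) (G : l.-tuple 'M[C]_n) :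
  'M[C]_n :=
  (\prod_(i < l) (delta_mx (tnth a (widen_ord (leqnSn l) i))
                           (tnth b (widen_ord (leqnSn l) i)) *m tnth G i))
  *m delta_mx (tnth a ord_max) (tnth b ord_max).

Definition hat_rep {d n : nat} (fw : seq 'I_d -> seq 'M[C]_n -> 'M[C]_n)
  (hat : seq 'I_n -> seq 'I_n -> seq 'I_d -> C) : Prop :=
  forall l (w : l.-tuple 'I_d) (G : l.-tuple 'M[C]_n),
    fw w G = \sum_(a : (l.+1).-tuple 'I_n) \sum_(b : (l.+1).-tuple 'I_n)
               hat a b w *: wordprod a b G.

Definition hatsum {d n : nat} (hat : seq 'I_n -> seq 'I_n -> seq 'I_d -> C) (l : nat) : R :=
  \sum_(a : (l.+1).-tuple 'I_n) \sum_(b : (l.+1).-tuple 'I_n) \sum_(w : l.-tuple 'I_d)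
     cnorm2 (hat a b w).

End NCDefs.

(* Test the complete boundedness of f_l at level 1 on the tuple whose i-th entry is
   E_{b_{i-1} a_i} in the coordinate w_i and 0 in the others: the (a_0, b_l) entry of the
   result is exactly hat f_{a,b;w}, because the word E_{a'_0 b'_0} G_1 ... G_l E_{a'_l b'_l}
   contributes to that entry only for (a', b') = (a, b).  Hence |hat f_{a,b;w}| <= ||f_l||_CB,
   and summing over the n^(2l+2) d^l index triples gives the bound with C = (n+1)^2 (d+1).
   Only the representation of the f_w by their coefficients is used (it also makes the
   supremum defining ||f_l||_CB finite). *)

From HB Require Import structures.
From mathcomp Require Import all_boot all_order all_algebra.
From mathcomp Require Import all_classical all_reals all_analysis.
From mathcomp Require Import complex mxtens.
From mathcomp Require Import ring lra.

Set Implicit Arguments.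
Unset Strict Implicit.
Unset Printing Implicit Defensive.

Import Order.TTheory GRing.Theory Num.Theory.
Local Open Scope ring_scope.
Local Open Scope classical_set_scope.

Lemma prodr_ord_eq0 (S : pzSemiRingType) k (G : 'I_k -> S) i :
  G i = 0 -> \prod_(j < k) G j = 0.
Proof.
elim: k G i => [|k IH] G i Gi; first by case: (i).
rewrite big_ord_recr /=; have [e|ne] := eqVneq i ord_max; first by rewrite -e Gi mulr0.
have lt_ik : (val i < k)%N.
  rewrite ltn_neqAle -ltnS ltn_ord andbT.
  by apply: contra ne => /eqP e; apply/eqP/val_inj.
by rewrite (IH _ (Ordinal lt_ik)) ?mul0r // -Gi; congr G; apply: val_inj.
Qed.

Lemma prodr_nat_bool (S : pzSemiRingType) k (P : 'I_k -> bool) :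
  \prod_(i < k) (P i)%:R = [forall i, P i]%:R :> S.
Proof.
have [/forallP allP|/forallPn[i /negbTE Pi]] := boolP [forall i, P i].
  by rewrite big1 // => i _; rewrite allP.
by rewrite (@prodr_ord_eq0 _ _ (fun j => (P j)%:R) i) // Pi.
Qed.

Lemma delta_mx_chain (S : comPzRingType) n (x y u v : nat -> 'I_n) k :
  (\prod_(i < k) (delta_mx (x i) (y i) *m delta_mx (u i) (v i))) *m delta_mx (x k) (y k)
  = (\prod_(i < k) ((y i == u i) && (v i == x i.+1))%:R) *: delta_mx (x 0) (y k) :> 'M[S]_n.
Proof.
elim: k => [|k IH]; first by rewrite !big_ord0 scale1r mul1mx.
rewrite !big_ord_recr /= -mulmxE !mulmxA IH -!scalemxAl mul_delta_mx_cond.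
case: (y k == u k); rewrite /= ?mulr0 ?mul0mx ?scaler0 ?scale0r // mul_delta_mx_cond.
by case: (v k == x k.+1); rewrite ?mulr1 ?mulr0 ?scaler0 ?scale0r.
Qed.

Section MatrixNorms.
Variable R : realType.
Local Notation C := (complex R).

Lemma cnorm2_ge0 (z : C) : 0 <= cnorm2 z.
Proof. by rewrite addr_ge0 // sqr_ge0. Qed.

Lemma cnorm2M (x y : C) : cnorm2 (x * y) = cnorm2 x * cnorm2 y.
Proof. by case: x => a b; case: y => c d; rewrite /cnorm2 /=; ring. Qed.

Lemma cnorm2D_le (x y : C) : cnorm2 (x + y) <= 2 * (cnorm2 x + cnorm2 y).
Proof.
case: x => a b; case: y => c d; rewrite /cnorm2 /=.
have := sqr_ge0 (a - c); have := sqr_ge0 (b - d); nra.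
Qed.

Lemma cnorm2_0 : cnorm2 (0 : C) = 0.
Proof. by rewrite /cnorm2 /= expr0n addr0. Qed.

Lemma cnorm2_1 : cnorm2 (1 : C) = 1.
Proof. by rewrite /cnorm2 /= expr1n expr0n addr0. Qed.

Lemma cnorm2_real (r : R) : cnorm2 (r%:C)%C = r ^+ 2.
Proof. by rewrite /cnorm2 /= expr0n addr0. Qed.

Lemma cnorm2_eq0 (z : C) : cnorm2 z = 0 -> z = 0.
Proof.
case: z => a b; rewrite /cnorm2 /= => /eqP.
by rewrite paddr_eq0 ?sqr_ge0 // !sqrf_eq0 => /andP[/eqP-> /eqP->].
Qed.

Lemma cnorm2_sum_le (I : Type) (r : seq I) (F : I -> C) :
  cnorm2 (\sum_(i <- r) F i) <= 2 ^+ size r * \sum_(i <- r) cnorm2 (F i).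
Proof.
elim: r => [|x r IH]; first by rewrite !big_nil cnorm2_0 mulr0.
rewrite !big_cons exprS -mulrA; apply: le_trans (cnorm2D_le _ _) _.
rewrite ler_pM2l // mulrDr lerD // ?IH // ler_peMl ?cnorm2_ge0 //.
by rewrite exprn_ege1 // ler1n.
Qed.

Lemma vnorm2_ge0 k (v : 'cV[C]_k) : 0 <= vnorm2 v.
Proof. by rewrite sumr_ge0 // => i _; apply: cnorm2_ge0. Qed.

Lemma vnorm2_0 k : vnorm2 (0 : 'cV[C]_k) = 0.
Proof. by rewrite /vnorm2 big1 // => i _; rewrite mxE cnorm2_0. Qed.

Lemma vnorm2Z k (c : C) (v : 'cV[C]_k) : vnorm2 (c *: v) = cnorm2 c * vnorm2 v.
Proof. by rewrite /vnorm2 mulr_sumr; apply: eq_bigr => i _; rewrite mxE cnorm2M. Qed.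

Lemma entry_le_vnorm2 k (v : 'cV[C]_k) i : cnorm2 (v i 0) <= vnorm2 v.
Proof.
by rewrite /vnorm2 (bigD1 i) //= lerDl sumr_ge0 // => j _; apply: cnorm2_ge0.
Qed.

Lemma vnorm2_eq0 k (v : 'cV[C]_k) : vnorm2 v = 0 -> v = 0.
Proof.
move=> v0; apply/matrixP => i j; rewrite ord1 mxE; apply: cnorm2_eq0.
by apply/eqP; rewrite eq_le cnorm2_ge0 andbT -v0 entry_le_vnorm2.
Qed.

Lemma vnorm2_sum_le k (T : finType) (F : T -> 'cV[C]_k) :
  vnorm2 (\sum_t F t) <= 2 ^+ size (index_enum T) * \sum_t vnorm2 (F t).
Proof.
rewrite /vnorm2 exchange_big mulr_sumr /=; apply: ler_sum => i _.
by rewrite summxE; apply: cnorm2_sum_le.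
Qed.

Definition opbound2 p q (A : 'M[C]_(p, q)) (c : R) :=
  0 <= c /\ forall v, vnorm2 (A *m v) <= c * vnorm2 v.

Lemma opbound2_mul p q r (A : 'M[C]_(p, q)) (B : 'M[C]_(q, r)) a b :
  opbound2 A a -> opbound2 B b -> opbound2 (A *m B) (a * b).
Proof.
move=> [a0 hA] [b0 hB]; split; first exact: mulr_ge0.
by move=> v; rewrite -mulmxA -mulrA (le_trans (hA _)) // ler_wpM2l.
Qed.

Lemma opbound2Z p q (A : 'M[C]_(p, q)) a (x : C) :
  opbound2 A a -> opbound2 (x *: A) (cnorm2 x * a).
Proof.
move=> [a0 hA]; split; first by rewrite mulr_ge0 // cnorm2_ge0.
by move=> v; rewrite -scalemxAl vnorm2Z -mulrA ler_wpM2l // cnorm2_ge0.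
Qed.

Lemma opbound2_sum p q (T : finType) (F : T -> 'M[C]_(p, q)) (c : T -> R) :
  (forall t, opbound2 (F t) (c t)) ->
  opbound2 (\sum_t F t) (2 ^+ size (index_enum T) * \sum_t c t).
Proof.
move=> hF; split.
  by rewrite mulr_ge0 ?exprn_ge0 // sumr_ge0 // => t _; case: (hF t).
move=> v; rewrite mulmx_suml (le_trans (vnorm2_sum_le _)) //.
rewrite -mulrA ler_wpM2l ?exprn_ge0 // mulr_suml; apply: ler_sum => t _.
by case: (hF t).
Qed.

Lemma opbound2_prod N k (G : 'I_k -> 'M[C]_N) :
  (forall i, opbound2 (G i) 1) -> opbound2 (\prod_(i < k) G i) 1.
Proof.
elim: k G => [|k IH] G hG.
  by rewrite big_ord0; split => // v; rewrite mul1r [1 *m v]mul1mx.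
rewrite big_ord_recr /= -mulmxE.
have := opbound2_mul (IH (fun i => G (widen_ord (leqnSn k) i)) (fun i => hG _)) (hG ord_max).
by rewrite mulr1.
Qed.

Lemma opbound2_exists p q (A : 'M[C]_(p, q)) : exists c, opbound2 A c.
Proof.
exists (\sum_i (2 ^+ size (index_enum 'I_q) * \sum_j cnorm2 (A i j))); split.
  by rewrite sumr_ge0 // => i _; rewrite mulr_ge0 ?exprn_ge0 // sumr_ge0 // => *;
    apply: cnorm2_ge0.
move=> v; rewrite /vnorm2 mulr_suml; apply: ler_sum => i _.
rewrite mxE (le_trans (cnorm2_sum_le _ _)) // -mulrA ler_wpM2l ?exprn_ge0 //.
rewrite mulr_suml; apply: ler_sum => j _.
by rewrite cnorm2M ler_wpM2l ?cnorm2_ge0 ?entry_le_vnorm2.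
Qed.

Lemma opbound2_ball p q (A : 'M[C]_(p, q)) :
  (forall u, vnorm2 u <= 1 -> vnorm2 (A *m u) <= 1) -> opbound2 A 1.
Proof.
move=> hA; split => // v; rewrite mul1r.
have [/vnorm2_eq0 v0|v_neq0] := eqVneq (vnorm2 v) 0.
  by rewrite v0 mulmx0 !vnorm2_0.
have v_gt0 : 0 < vnorm2 v by rewrite lt_def v_neq0 vnorm2_ge0.
pose t := (Num.sqrt (vnorm2 v))^-1.
have t2 : t ^+ 2 = (vnorm2 v)^-1 by rewrite exprVn sqr_sqrtr // ltW.
have := hA ((t%:C)%C *: v); rewrite -scalemxAr !vnorm2Z cnorm2_real t2 mulVf //.
by move=> /(_ (lexx _)); rewrite ler_pdivrMl // mulr1.
Qed.

Lemma opnorm_has_sup p q (A : 'M[C]_(p, q)) :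
  has_sup [set Num.sqrt (vnorm2 (A *m v)) | v in [set v : 'cV[C]_q | vnorm2 v <= 1]].
Proof.
split; first by exists (Num.sqrt (vnorm2 (A *m 0))), 0 => //=; rewrite vnorm2_0.
have [c [c0 hc]] := opbound2_exists A.
exists (Num.sqrt c) => _ [v /= v1 <-]; rewrite ler_sqrt //.
by rewrite (le_trans (hc v)) // ler_piMr.
Qed.

Lemma opnorm_ub p q (A : 'M[C]_(p, q)) v :
  vnorm2 v <= 1 -> Num.sqrt (vnorm2 (A *m v)) <= opnorm A.
Proof. by move=> v1; apply: sup_upper_bound; [apply: opnorm_has_sup | exists v]. Qed.

Lemma opnorm_ge0 p q (A : 'M[C]_(p, q)) : 0 <= opnorm A.
Proof. by rewrite (le_trans _ (opnorm_ub A (_ : vnorm2 0 <= 1))) ?vnorm2_0. Qed.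

Lemma opnorm_le p q (A : 'M[C]_(p, q)) c : opbound2 A c -> opnorm A <= Num.sqrt c.
Proof.
move=> [c0 hc]; apply: ge_sup.
  by exists (Num.sqrt (vnorm2 (A *m 0))), 0 => //=; rewrite vnorm2_0.
by move=> _ [v /= v1 <-]; rewrite ler_sqrt // (le_trans (hc v)) // ler_piMr.
Qed.

Lemma entry_le_opnorm p q (A : 'M[C]_(p, q)) i j : cnorm2 (A i j) <= opnorm A ^+ 2.
Proof.
have ej1 : vnorm2 (delta_mx j 0 : 'cV[C]_q) <= 1.
  rewrite /vnorm2 (bigD1 j) //= big1 ?addr0 => [|k /negbTE kj].
    by rewrite mxE !eqxx cnorm2_1.
  by rewrite mxE kj cnorm2_0.
have Aej : (A *m (delta_mx j 0 : 'cV[C]_q)) i 0 = A i j.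
  rewrite mxE (bigD1 j) //= big1 ?addr0 => [|k /negbTE kj].
    by rewrite mxE !eqxx mulr1.
  by rewrite mxE kj mulr0.
rewrite -Aej (le_trans (entry_le_vnorm2 _ i)) // -(sqr_sqrtr (vnorm2_ge0 _)).
by rewrite lerXn2r ?nnegrE ?sqrtr_ge0 ?opnorm_ge0 ?opnorm_ub.
Qed.

Lemma colnorm_has_sup d k (X : 'I_d -> 'M[C]_k) :
  has_sup [set Num.sqrt (\sum_w vnorm2 (X w *m v))
      | v in [set v : 'cV[C]_k | vnorm2 v <= 1]].
Proof.
split; first by exists (Num.sqrt (\sum_w vnorm2 (X w *m 0))), 0 => //=; rewrite vnorm2_0.
have [c hc] := fin_all_exists (fun w => opbound2_exists (X w)).
exists (Num.sqrt (\sum_w c w)) => _ [v /= v1 <-].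
rewrite ler_sqrt; last by rewrite sumr_ge0 // => w _; case: (hc w).
apply: ler_sum => w _; have [c0 hcw] := hc w.
by rewrite (le_trans (hcw v)) // ler_piMr.
Qed.

Lemma colnorm_le1 d k (X : 'I_d -> 'M[C]_k) :
  (forall v, vnorm2 v <= 1 -> \sum_w vnorm2 (X w *m v) <= 1) -> colnorm X <= 1.
Proof.
move=> hX; apply: ge_sup.
  by exists (Num.sqrt (\sum_w vnorm2 (X w *m 0))), 0 => //=; rewrite vnorm2_0.
by move=> _ [v /= v1 <-]; rewrite -sqrtr1 ler_sqrt // hX.
Qed.

Lemma colnorm_le1_opbound2 d k (X : 'I_d -> 'M[C]_k) w :
  colnorm X <= 1 -> opbound2 (X w) 1.
Proof.
move=> hX; apply: opbound2_ball => u u1.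
have sqrt_le1 : Num.sqrt (\sum_w vnorm2 (X w *m u)) <= 1.
  by apply: le_trans hX; apply: sup_upper_bound; [apply: colnorm_has_sup | exists u].
have sum_le1 : \sum_w vnorm2 (X w *m u) <= 1.
  by rewrite -(ler_sqrt _ ler01) sqrtr1.
apply: le_trans sum_le1; rewrite (bigD1 w) //= lerDl.
by rewrite sumr_ge0 // => w' _; apply: vnorm2_ge0.
Qed.

End MatrixNorms.

Section BlockMatrices.
Variable R : realType.
Local Notation C := (complex R).

Lemma big_mxtens_index (V : nmodType) m n (G : 'I_(m * n) -> V) :
  \sum_k G k = \sum_(p : 'I_m) \sum_(i : 'I_n) G (mxtens_index (p, i)).
Proof.
rewrite pair_big /= (reindex (@mxtens_index m n)) /=; first by apply: eq_bigr => -[].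
by exists (@mxtens_unindex m n) => x _; rewrite (mxtens_indexK, mxtens_unindexK).
Qed.

Lemma blk_assemble m n (B : 'I_m -> 'I_m -> 'M[C]_n) p q : blk (assemble B) p q = B p q.
Proof. by apply/matrixP => i j; rewrite !mxE !mxtens_indexK. Qed.

Lemma blk_inj m n (X Y : 'M[C]_(m * n)) :
  (forall p q, blk X p q = blk Y p q) -> X = Y.
Proof.
move=> eXY; apply/matrixP => i j.
case: (mxtens_indexP i) => p a; case: (mxtens_indexP j) => q b.
by have := congr1 (fun M : 'M[C]_n => M a b) (eXY p q); rewrite !mxE.
Qed.

Lemma blkZ m n (c : C) (X : 'M[C]_(m * n)) p q : blk (c *: X) p q = c *: blk X p q.
Proof. by apply/matrixP => i j; rewrite !mxE. Qed.

Lemma blk_sum m n (T : finType) (F : T -> 'M[C]_(m * n)) p q :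
  blk (\sum_t F t) p q = \sum_t blk (F t) p q.
Proof. by apply/matrixP => i j; rewrite !mxE !summxE; apply: eq_bigr => t _; rewrite mxE. Qed.

Lemma blk_mul m n (X Y : 'M[C]_(m * n)) p q :
  blk (X *m Y) p q = \sum_r blk X p r *m blk Y r q.
Proof.
apply/matrixP => i j; rewrite !mxE summxE big_mxtens_index; apply: eq_bigr => r _.
by rewrite mxE; apply: eq_bigr => k _; rewrite !mxE.
Qed.

Lemma tens1mx_entry m n (M : 'M[C]_n) p i j :
  ((1%:M : 'M[C]_m) *t M) (mxtens_index (p, i)) (mxtens_index (p, j)) = M i j.
Proof. by rewrite tensmxE mxE eqxx mul1r. Qed.

Lemma blk_tens1mx m n (M : 'M[C]_n) p q :
  blk ((1%:M : 'M[C]_m) *t M) p q = (p == q)%:R *: M.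
Proof. by apply/matrixP => i j; rewrite [LHS]mxE tensmxE !mxE. Qed.

Lemma tens1mx_mul m n (M N : 'M[C]_n) :
  (1%:M : 'M[C]_m) *t (M *m N) = (1%:M *t M) *m (1%:M *t N).
Proof. by rewrite tensmx_mul mul1mx. Qed.

Lemma tens1mx1 m n : (1%:M : 'M[C]_m) *t (1%:M : 'M[C]_n) = 1%:M.
Proof.
apply: blk_inj => p q; rewrite blk_tens1mx; apply/matrixP => i j.
rewrite !mxE (inj_eq (can_inj (@mxtens_indexK m n))) xpair_eqE.
by case: (p == q); case: (i == j); rewrite ?mulr1 ?mulr0.
Qed.

Lemma tens1mx_prod m n k (G : 'I_k -> 'M[C]_n) :
  (1%:M : 'M[C]_m) *t (\prod_(i < k) G i) = \prod_(i < k) (1%:M *t G i).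
Proof.
elim: k G => [|k IH] G; first by rewrite !big_ord0 tens1mx1.
by rewrite !big_ord_recr /= -!mulmxE tens1mx_mul IH.
Qed.

Lemma tens1mx_delta_apply m n (a b : 'I_n) (v : 'cV[C]_(m * n)) p i :
  (((1%:M : 'M[C]_m) *t delta_mx a b) *m v) (mxtens_index (p, i)) 0
  = (i == a)%:R * v (mxtens_index (p, b)) 0.
Proof.
rewrite mxE big_mxtens_index (bigD1 p) //= [X in _ + X]big1 ?addr0 => [|r rp].
  rewrite (bigD1 b) //= [X in _ + X]big1 ?addr0 => [|j jb].
    by rewrite tensmxE !mxE !eqxx andbT mul1r.
  by rewrite tensmxE !mxE (negbTE jb) andbF mulr0 mul0r.
by rewrite big1 // => j _; rewrite tensmxE !mxE eq_sym (negbTE rp) !mul0r.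
Qed.

Lemma opbound2_tens1mx_delta m n (a b : 'I_n) :
  opbound2 ((1%:M : 'M[C]_m) *t delta_mx a b) 1.
Proof.
split => // v; rewrite mul1r /vnorm2 !big_mxtens_index; apply: ler_sum => p _.
rewrite (bigD1 a) //= big1 ?addr0 => [|i /negbTE ia]; last first.
  by rewrite tens1mx_delta_apply ia mul0r cnorm2_0.
rewrite tens1mx_delta_apply eqxx mul1r (bigD1 b) //= lerDl.
by rewrite sumr_ge0 // => j _; apply: cnorm2_ge0.
Qed.

Section FfunSnoc.
Variables (T : Type) (k : nat).

Definition ffun_snoc (tx : {ffun 'I_k.+1 -> T} * T) : {ffun 'I_k.+2 -> T} :=
  [ffun j : 'I_k.+2 => if insub (val j) is Some j' then tx.1 j' else tx.2].

Lemma ffun_snocE tx (j : 'I_k.+2) (j' : 'I_k.+1) : val j = val j' -> ffun_snoc tx j = tx.1 j'.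
Proof.
move=> e; rewrite ffunE; have lt_jk : (val j < k.+1)%N by rewrite e ltn_ord.
by rewrite (insubT (fun x => (x < k.+1)%N) lt_jk); congr (tx.1 _); apply: val_inj.
Qed.

Lemma ffun_snocE_last tx (j : 'I_k.+2) : val j = k.+1 -> ffun_snoc tx j = tx.2.
Proof. by move=> e; rewrite ffunE insubF // e ltnn. Qed.

Lemma ffun_snoc_bij : bijective ffun_snoc.
Proof.
exists (fun t : {ffun 'I_k.+2 -> T} =>
  ([ffun j : 'I_k.+1 => t (widen_ord (leqnSn _) j)], t ord_max)).
  move=> [t x]; congr (_, _); last by rewrite ffun_snocE_last.
  by apply/ffunP => j; rewrite ffunE (ffun_snocE _ (j' := j)).
move=> t; apply/ffunP => j; have [lt_jk|ge_jk] := ltnP (val j) k.+1.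
  by rewrite (ffun_snocE _ (j' := Ordinal lt_jk)) // ffunE; congr (t _); apply: val_inj.
have e : val j = k.+1 by apply/eqP; rewrite eqn_leq ge_jk -ltnS ltn_ord.
by rewrite ffun_snocE_last //=; congr (t _); apply: val_inj.
Qed.

End FfunSnoc.

Lemma blk_prod m n k (F : 'I_k -> 'M[C]_(m * n)) p q :
  blk (\prod_(i < k) F i) p q =
  \sum_(t : {ffun 'I_k.+1 -> 'I_m} | (t ord0 == p) && (t ord_max == q))
     \prod_(i < k) blk (F i) (t (widen_ord (leqnSn k) i)) (t (lift ord0 i)).
Proof.
elim: k F p q => [|k IH] F p q.
  rewrite big_ord0 -[1]/(1%:M) -tens1mx1 blk_tens1mx.
  rewrite (reindex (fun x : 'I_m => [ffun _ : 'I_1 => x])) /=; last first.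
    exists (fun t : {ffun 'I_1 -> 'I_m} => t ord0) => [x _|t _]; first by rewrite ffunE.
    by apply/ffunP => j; rewrite ffunE (ord1 j).
  under eq_bigl => x do rewrite !ffunE.
  under eq_bigr => x _ do rewrite big_ord0.
  have [<-|pq] := eqVneq p q.
    by rewrite (eq_bigl (pred1 p)) ?big_pred1_eq ?scale1r // => x; rewrite andbb.
  rewrite big_pred0 ?scale0r // => x; apply/negbTE; apply: contra pq.
  by case/andP => /eqP <- /eqP <-.
pose Pk (t : {ffun 'I_k.+1 -> 'I_m}) := \prod_(i < k)
  blk (F (widen_ord (leqnSn k) i)) (t (widen_ord (leqnSn k) i)) (t (lift ord0 i)).
transitivity (\sum_(tx : {ffun 'I_k.+1 -> 'I_m} * 'I_m | (tx.1 ord0 == p) && (tx.2 == q))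
     (Pk tx.1 * blk (F ord_max) (tx.1 ord_max) tx.2)); last first.
  rewrite (reindex (@ffun_snoc _ k)); last exact/onW_bij/ffun_snoc_bij.
  apply: eq_big => [tx|tx _].
    by rewrite (ffun_snocE _ (j' := ord0)) // (ffun_snocE_last _ (j := ord_max)).
  symmetry; rewrite big_ord_recr /=; congr (_ * _).
    by apply: eq_bigr => i _; congr blk; apply: ffun_snocE.
  by congr blk; [apply: ffun_snocE | apply: ffun_snocE_last].
rewrite -(pair_big_dep (fun t : {ffun 'I_k.+1 -> 'I_m} => t ord0 == p) (fun _ x => x == q)
   (fun t x => Pk t * blk (F ord_max) (t ord_max) x)) /=.
under [RHS]eq_bigr => t _ do rewrite big_pred1_eq.
rewrite big_ord_recr /= -mulmxE blk_mul.
rewrite [RHS](partition_big (fun t : {ffun 'I_k.+1 -> 'I_m} => t ord_max) xpredT) //=.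
apply: eq_bigr => r _; rewrite IH mulmxE mulr_suml.
by apply: eq_big => t // /andP[_ /eqP ->].
Qed.

End BlockMatrices.

Section Wordprods.
Variables (R : realType) (n : nat).
Local Notation C := (complex R).

Definition tens1_wordprod m l (a b : (l.+1).-tuple 'I_n) (H : 'I_l -> 'M[C]_(m * n)) :=
  (\prod_(i < l) ((1%:M : 'M[C]_m) *t delta_mx (tnth a (widen_ord (leqnSn l) i))
                                              (tnth b (widen_ord (leqnSn l) i)) *m H i))
  *m ((1%:M : 'M[C]_m) *t delta_mx (tnth a ord_max) (tnth b ord_max)).

Lemma tens1_wordprod_tens1 m l (a b : (l.+1).-tuple 'I_n) (H : 'I_l -> 'M[C]_(m * n))
  (G : l.-tuple 'M[C]_n) :
  (forall i, H i = (1%:M : 'M[C]_m) *t tnth G i) ->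
  tens1_wordprod a b H = (1%:M : 'M[C]_m) *t wordprod a b G.
Proof.
move=> eH; rewrite /tens1_wordprod /wordprod tens1mx_mul tens1mx_prod.
by congr (_ *m _); apply: eq_bigr => i _; rewrite eH tens1mx_mul.
Qed.

Lemma opbound2_tens1_wordprod m l (a b : (l.+1).-tuple 'I_n) (H : 'I_l -> 'M[C]_(m * n)) :
  (forall i, opbound2 (H i) 1) -> opbound2 (tens1_wordprod a b H) 1.
Proof.
move=> hH; rewrite -[X in opbound2 _ X](mulr1 1).
apply: opbound2_mul; last exact: opbound2_tens1mx_delta.
apply: opbound2_prod => i; rewrite -[X in opbound2 _ X](mulr1 1).
by apply: opbound2_mul; [apply: opbound2_tens1mx_delta | apply: hH].
Qed.

Lemma blk_tens1_wordprod m l (a b : (l.+1).-tuple 'I_n) (H : 'I_l -> 'M[C]_(m * n)) p q :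
  blk (tens1_wordprod a b H) p q =
  \sum_(t : {ffun 'I_l.+1 -> 'I_m} | (t ord0 == p) && (t ord_max == q))
     wordprod a b [tuple blk (H i) (t (widen_ord (leqnSn l) i)) (t (lift ord0 i)) | i < l].
Proof.
rewrite /tens1_wordprod blk_mul (bigD1 q) //= [X in _ + X]big1 ?addr0 => [|r /negbTE rq];
  last first.
  by rewrite blk_tens1mx rq scale0r mulmx0.
rewrite blk_tens1mx eqxx scale1r blk_prod mulmx_suml; apply: eq_bigr => t _.
congr (_ *m _); apply: eq_bigr => i _; rewrite tnth_mktuple blk_mul.
rewrite (bigD1 (t (widen_ord (leqnSn l) i))) //= [X in _ + X]big1 ?addr0 => [|r /negbTE rt].
  by rewrite blk_tens1mx eqxx scale1r.
by rewrite blk_tens1mx eq_sym rt scale0r mul0mx.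
Qed.

Lemma wordprod_eq0 l (a b : (l.+1).-tuple 'I_n) (G : l.-tuple 'M[C]_n) i :
  tnth G i = 0 -> wordprod a b G = 0.
Proof.
move=> Gi; rewrite /wordprod.
by rewrite (@prodr_ord_eq0 _ _ (fun j => _ *m tnth G j) i) ?mul0mx // Gi mulmx0.
Qed.

Lemma chain_indicesE l (a b a' b' : (l.+1).-tuple 'I_n) :
  [forall i : 'I_l, (tnth b' (inord i) == tnth b (inord i))
                    && (tnth a (inord i.+1) == tnth a' (inord i.+1))]
    && ((tnth a (inord 0) == tnth a' (inord 0)) && (tnth b (inord l) == tnth b' (inord l)))
  = (a' == a) && (b' == b).
Proof.
apply/idP/idP; last first.
  by case/andP => /eqP-> /eqP->; rewrite !eqxx !andbT; apply/forallP => i; rewrite !eqxx.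
case/andP => /forallP chain /andP[/eqP a0 /eqP bl].
rewrite !eqEtuple; apply/andP; split; apply/forallP => j; rewrite -(inord_val j).
  case: (nat_of_ord j) (ltn_ord j) => [|i] lt_il; first by rewrite a0.
  by case/andP: (chain (Ordinal (lt_il : (i < l)%N))) => _ /eqP->.
have [lt_jl|ge_jl] := ltnP (nat_of_ord j) l.
  by case/andP: (chain (Ordinal lt_jl)) => /eqP->.
suff -> : nat_of_ord j = l by rewrite bl.
by apply: anti_leq; rewrite ge_jl andbT -ltnS.
Qed.

Lemma wordprod_probe_entry l (a b a' b' : (l.+1).-tuple 'I_n) :
  wordprod a' b' [tuple (delta_mx (tnth b (widen_ord (leqnSn l) i)) (tnth a (lift ord0 i))
                         : 'M[C]_n) | i < l] (tnth a ord0) (tnth b ord_max)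
  = ((a' == a) && (b' == b))%:R.
Proof.
pose t_ (t : (l.+1).-tuple 'I_n) j := tnth t (inord j).
have t_widen t (i : 'I_l) : tnth t (widen_ord (leqnSn l) i) = t_ t i.
  by congr tnth; apply: val_inj; rewrite /= inordK // ltnS ltnW.
have t_lift t (i : 'I_l) : tnth t (lift ord0 i) = t_ t i.+1.
  by congr tnth; apply: val_inj; rewrite /= /bump add1n inordK // ltnS.
have t_max t : tnth t ord_max = t_ t l by congr tnth; apply: val_inj; rewrite /= inordK.
have t_0 t : tnth t ord0 = t_ t 0 by congr tnth; apply: val_inj; rewrite /= inordK.
rewrite /wordprod; under eq_bigr => i _ do rewrite tnth_mktuple !t_widen t_lift.
rewrite !t_max !t_0 (@delta_mx_chain _ _ (t_ a') (t_ b') (t_ b) (fun j => t_ a j.+1)).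
by rewrite !mxE prodr_nat_bool -natrM mulnb /t_ chain_indicesE.
Qed.

End Wordprods.

Section CoefficientBound.
Variables (R : realType) (n d : nat).
Local Notation C := (complex R).
Variables (fw : seq 'I_d -> seq 'M[C]_n -> 'M[C]_n) (hat : seq 'I_n -> seq 'I_n -> seq 'I_d -> C).
Hypothesis fw_hat : hat_rep fw hat.

Lemma hprod_expand m l (w : l.-tuple 'I_d) (H : 'I_l -> 'M[C]_(m * n)) :
  hprod (fw w) H = \sum_(a : (l.+1).-tuple 'I_n) \sum_(b : (l.+1).-tuple 'I_n)
     hat a b w *: tens1_wordprod a b H.
Proof.
apply: blk_inj => p q; rewrite blk_assemble blk_sum.
under [RHS]eq_bigr => a _ do rewrite blk_sum.
under [RHS]eq_bigr => a _ do under eq_bigr => b _ do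
  rewrite blkZ blk_tens1_wordprod scaler_sumr.
pose G (t : {ffun 'I_l.+1 -> 'I_m}) :=
  [tuple blk (H i) (t (widen_ord (leqnSn l) i)) (t (lift ord0 i)) | i < l].
transitivity (\sum_(t : {ffun 'I_l.+1 -> 'I_m} | (t ord0 == p) && (t ord_max == q))
   fw w (G t)); first by apply: eq_bigr.
rewrite (eq_bigr _ (fun t _ => fw_hat w (G t))).
by rewrite exchange_big; apply: eq_bigr => a _; rewrite exchange_big.
Qed.

Lemma opbound2_hprod_sum l : exists c, forall m (Xs : 'I_l -> 'I_d -> 'M[C]_(m * n)),
  (forall i, colnorm (Xs i) <= 1) ->
  opbound2 (\sum_(w : l.-tuple 'I_d) hprod (fw w) (fun i => Xs i (tnth w i))) c.
Proof.
eexists => m Xs Xs_le1; under eq_bigr => w _ do rewrite hprod_expand.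
apply: opbound2_sum => w; apply: opbound2_sum => a; apply: opbound2_sum => b.
by apply: opbound2Z; apply: opbound2_tens1_wordprod => i; apply: colnorm_le1_opbound2.
Qed.

Lemma cbnorm_has_sup l :
  has_sup [set r : R | exists (m : nat) (Xs : 'I_l -> 'I_d -> 'M[C]_(m * n)),
         (forall i, colnorm (Xs i) <= 1) /\
         r = opnorm (\sum_(w : l.-tuple 'I_d) hprod (fw w) (fun i => Xs i (tnth w i)))].
Proof.
have [c hc] := opbound2_hprod_sum l; split.
  exists (opnorm (\sum_(w : l.-tuple 'I_d)
            hprod (fw w) (fun i => (fun _ _ => 0 : 'M[C]_(1 * n)) i (tnth w i)))).
  exists 1%N, (fun _ _ => 0); split => // i; apply: colnorm_le1 => v _.
  by rewrite big1 // => w _; rewrite mul0mx vnorm2_0.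
by exists (Num.sqrt c) => _ [m [Xs [Xs_le1 ->]]]; apply/opnorm_le/hc.
Qed.

Lemma opnorm_le_cbnorm l m (Xs : 'I_l -> 'I_d -> 'M[C]_(m * n)) :
  (forall i, colnorm (Xs i) <= 1) ->
  opnorm (\sum_(w : l.-tuple 'I_d) hprod (fw w) (fun i => Xs i (tnth w i))) <= cbnorm fw l.
Proof.
by move=> Xs_le1; apply: sup_upper_bound; [apply: cbnorm_has_sup | exists m, Xs].
Qed.

Lemma cbnorm_ge0 l : 0 <= cbnorm fw l.
Proof.
apply: le_trans (opnorm_le_cbnorm (m := 1%N) (Xs := fun _ _ => 0) _); first exact: opnorm_ge0.
move=> i; apply: colnorm_le1 => v _.
by rewrite big1 // => w _; rewrite mul0mx vnorm2_0.
Qed.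

Lemma cnorm2_hat_le_cbnorm l (a b : (l.+1).-tuple 'I_n) (w0 : l.-tuple 'I_d) :
  cnorm2 (hat a b w0) <= cbnorm fw l ^+ 2.
Proof.
pose probe (i : 'I_l) : 'M[C]_n :=
  delta_mx (tnth b (widen_ord (leqnSn l) i)) (tnth a (lift ord0 i)).
pose G (w : l.-tuple 'I_d) := [tuple (tnth w i == tnth w0 i)%:R *: probe i | i < l].
pose Xs i u : 'M[C]_(1 * n) := 1%:M *t ((u == tnth w0 i)%:R *: probe i).
have Xs_le1 i : colnorm (Xs i) <= 1.
  apply: colnorm_le1 => v v1; rewrite (bigD1 (tnth w0 i)) //= big1 ?addr0 => [|u /negbTE uw].
    have [_ /(_ v)] := @opbound2_tens1mx_delta R 1 n (tnth b (widen_ord (leqnSn l) i))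
                                                   (tnth a (lift ord0 i)).
    by rewrite /Xs eqxx scale1r mul1r => /le_trans; apply.
  by rewrite /Xs uw scale0r tensmx0 mul0mx vnorm2_0.
pose F := \sum_(w : l.-tuple 'I_d) hprod (fw w) (fun i => Xs i (tnth w i)).
suff <- : F (mxtens_index (ord0, tnth a ord0)) (mxtens_index (ord0, tnth b ord_max)) = hat a b w0.
  apply: le_trans (entry_le_opnorm _ _ _) _; rewrite lerXn2r ?nnegrE ?opnorm_ge0 //.
    exact: cbnorm_ge0.
  exact: opnorm_le_cbnorm.
have XsG w i : Xs i (tnth w i) = 1%:M *t tnth (G w) i by rewrite tnth_mktuple.
rewrite /F summxE (bigD1 w0) //= [X in _ + X]big1 ?addr0 => [|w w_neq]; last first.
  have /existsP[i wi] : [exists i, tnth w i != tnth w0 i] by rewrite -negb_forall -eqEtuple.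
  rewrite hprod_expand summxE big1 // => a' _; rewrite summxE big1 // => b' _.
  rewrite (tens1_wordprod_tens1 _ _ (XsG w)) (@wordprod_eq0 R n l a' b' (G w) i).
    by rewrite tensmx0 scaler0 mxE.
  by rewrite tnth_mktuple (negbTE wi) scale0r.
have G_w0 : G w0 = [tuple probe i | i < l].
  by apply: eq_from_tnth => i; rewrite !tnth_mktuple eqxx scale1r.
transitivity (\sum_(a' : (l.+1).-tuple 'I_n) \sum_(b' : (l.+1).-tuple 'I_n)
                hat a' b' w0 * ((a' == a) && (b' == b))%:R).
  rewrite hprod_expand summxE; apply: eq_bigr => a' _; rewrite summxE.
  apply: eq_bigr => b' _; rewrite (tens1_wordprod_tens1 _ _ (XsG w0)) G_w0.
  by rewrite mxE tens1mx_entry wordprod_probe_entry.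
rewrite (bigD1 a) //= [X in _ + X]big1 ?addr0 => [|a' /negbTE a'a]; last first.
  by rewrite big1 // => b' _; rewrite a'a mulr0.
rewrite (bigD1 b) //= [X in _ + X]big1 ?addr0 => [|b' /negbTE b'b]; last first.
  by rewrite b'b andbF mulr0.
by rewrite !eqxx mulr1.
Qed.

Lemma hatsum_le_cbnorm l :
  hatsum hat l <= cbnorm fw l ^+ 2 * (n ^ l.+1 * n ^ l.+1 * d ^ l)%:R.
Proof.
apply: (@le_trans _ _ (\sum_(a : (l.+1).-tuple 'I_n) \sum_(b : (l.+1).-tuple 'I_n)
                         \sum_(w : l.-tuple 'I_d) cbnorm fw l ^+ 2)).
  by do 3!(apply: ler_sum => ? _); apply: cnorm2_hat_le_cbnorm.
by rewrite !sumr_const !card_tuple !card_ord -!mulrnA [(d ^ l * _)%N]mulnC mulr_natr.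
Qed.

End CoefficientBound.

Lemma hatsum_ge0 (R : realType) n d (hat : seq 'I_n -> seq 'I_n -> seq 'I_d -> complex R) l :
  0 <= hatsum hat l.
Proof. by do 3!(apply: sumr_ge0 => ? _); apply: cnorm2_ge0. Qed.

Lemma coef_count_le n d l : (0 < l)%N ->
  (n ^ l.+1 * n ^ l.+1 * d ^ l <= (n.+1 * n.+1 * d.+1) ^ l.*2)%N.
Proof.
move=> l_gt0; have lS_le : (l.+1 <= l.*2)%N by rewrite -addnn -addn1 leq_add2l.
have n_le : (n ^ l.+1 <= n.+1 ^ l.*2)%N.
  by rewrite (@leq_trans (n.+1 ^ l.+1)) ?leq_exp2r ?leq_pexp2l.
have d_le : (d ^ l <= d.+1 ^ l.*2)%N.
  by rewrite (@leq_trans (d.+1 ^ l)) ?leq_exp2r ?leq_pexp2l // -addnn leq_addr.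
by rewrite !expnMn !leq_mul.
Qed.

Lemma powR_sqrMn_le (R : realType) (c : R) (N K l : nat) :
  (0 < l)%N -> 0 <= c -> (N <= K ^ l.*2)%N ->
  (c ^+ 2 * N%:R) `^ (l.*2)%:R^-1 <= K%:R * c `^ l%:R^-1.
Proof.
move=> l_gt0 c0 NK; have l2_neq0 : (l.*2)%:R != 0 :> R by rewrite pnatr_eq0 double_eq0 -lt0n.
rewrite powRM ?exprn_ge0 ?ler0n // mulrC ler_pM ?powR_ge0 //.
  have K_root : K%:R = (K%:R ^+ l.*2) `^ (l.*2)%:R^-1 :> R.
    by rewrite -powR_mulrn ?ler0n // -powRrM mulfV // powRr1 ?ler0n.
  rewrite [leRHS]K_root ge0_ler_powR ?invr_ge0 ?nnegrE ?exprn_ge0 ?ler0n //.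
  by rewrite -natrX ler_nat.
by rewrite -powR_mulrn // -powRrM -muln2 natrM invfM mulrA mulrAC mulfV ?mul1r ?pnatr_eq0.
Qed.

Theorem mainTheorem11 (R : realType) (n d : nat)
  (Y : 'I_d -> 'M[complex R]_n)
  (Omega : forall k, set ('I_d -> 'M[complex R]_k))
  (f : forall k, ('I_d -> 'M[complex R]_k) -> 'M[complex R]_k)
  (fw : seq 'I_d -> seq 'M[complex R]_n -> 'M[complex R]_n)
  (hat : seq 'I_n -> seq 'I_n -> seq 'I_d -> complex R) :
  nc_set Omega -> uniformly_open Omega -> Omega n Y ->
  nc_function Omega f -> uniformly_locally_bounded Omega f ->
  multilinear_family fw -> taylor_taylor Omega f Y fw ->
  hat_rep fw hat ->
  exists2 C : R, 0 < C &
    forall l : nat, (0 < l)%N ->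
      powR (hatsum hat l) ((l.*2)%:R)^-1 <= C * powR (cbnorm fw l) (l%:R)^-1.
Proof.
move=> _ _ _ _ _ _ _ fw_hat.
exists (n.+1 * n.+1 * d.+1)%N%:R => [|l l_gt0]; first by rewrite ltr0n !muln_gt0.
apply: le_trans (powR_sqrMn_le l_gt0 (cbnorm_ge0 fw_hat l) (coef_count_le n d l_gt0)).
rewrite ge0_ler_powR ?invr_ge0 ?ler0n ?nnegrE ?hatsum_ge0 ?hatsum_le_cbnorm //.
by rewrite mulr_ge0 ?ler0n ?exprn_ge0 ?(cbnorm_ge0 fw_hat).
Qed.
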